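(* Let $d\ge1$, $f\ge1$ and $q\ge 2f+1$ be integers, and let $H_1=\{1,\dots,q-f\}$ and $H_2=\{q+1,\dots,2q-f\}$. Then for all $(x_1,\dots,x_{2q})\in(\mathbb{R}^d)^{2q}$, $$\Big\|\mathrm{MDA}_f(x_1,\dots,x_q)-\mathrm{MDA}_f(x_{q+1},\dots,x_{2q})\Big\|_2\le 3\max_{(i,j)\in(H_1\cup H_2)^2}\|x_i-x_j\|_2 .$$
   Context: Minimum–Diameter Averaging: for integers $f\ge 0$, $q\ge 2f+1$ and vectors $x_1,\dots,x_q\in\mathbb{R}^d$, $\mathrm{MDA}_f(x_1,\dots,x_q)$ is defined as follows: among all index sets $I\subset\{1,\dots,q\}$ with $|I|=q-f$, choose one, $I^*$, minimizing $\max_{i,j\in I}\|x_i-x_j\|_2$ (ties broken arbitrarily); then $\mathrm{MDA}_f(x_1,\dots,x_q)=\frac{1}{q-f}\sum_{i\in I^*}x_i$. *)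

(* Vectors of R^d are row vectors 'rV[R]_d over an arbitrary
   real closed field R (so that Num.sqrt is available); this generalizes R = reals. *)
From HB Require Import structures.
From mathcomp Require Import all_boot all_order all_algebra.
Set Implicit Arguments. Unset Strict Implicit. Unset Printing Implicit Defensive.
Import Order.TTheory GRing.Theory Num.Theory.
Local Open Scope ring_scope.

Definition norm2 (R : rcfType) (d : nat) (v : 'rV[R]_d) : R :=
  Num.sqrt (\sum_(k < d) v 0 k ^+ 2).

(* max_{i,j in I} ||x_i - x_j||_2 ; 0 for empty I (norms are >= 0) *)
Definition diam (R : rcfType) (d n : nat) (x : 'I_n -> 'rV[R]_d) (I : pred 'I_n) : R :=
  \big[Num.max/0]_(i | I i) \big[Num.max/0]_(j | I j) norm2 (x i - x j).

(* y is a value of MDA_f(x_1,...,x_q) for SOME admissible tie-breaking: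
   y is the average over an index set I* of size q - f of minimal diameter. *)
Definition is_MDA (R : rcfType) (d f q : nat) (x : 'I_q -> 'rV[R]_d) (y : 'rV[R]_d) : Prop :=
  exists I : {set 'I_q},
    [/\ #|I| = (q - f)%N,
        (forall J : {set 'I_q}, #|J| = (q - f)%N -> diam x (mem I) <= diam x (mem J))
      & y = ((q - f)%:R)^-1 *: \sum_(i in I) x i].

(* The honest vectors among the first q inputs form a set of size q - f whose
   diameter is at most D, the diameter of all honest vectors.  The set chosen by
   MDA has the same size, so its diameter is at most D as well, and since
   2 (q - f) > q the two sets share an index a.  The MDA output, being an
   average of points within D of x_a, is itself within D of x_a.  Likewise the
   second output is within D of some honest x_b, and ||x_a - x_b|| <= D. *)
From HB Require Import structures.
From mathcomp Require Import all_boot all_order all_algebra.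
From mathcomp Require Import zify ring lra.
Import Order.TTheory GRing.Theory Num.Theory.
Local Open Scope ring_scope.

Section EuclideanNorm.
Context {R : rcfType} {d : nat}.
Implicit Types u v : 'rV[R]_d.

Lemma cauchy_schwarz (a b : 'I_d -> R) :
  (\sum_k a k * b k) ^+ 2 <= (\sum_k a k ^+ 2) * (\sum_k b k ^+ 2).
Proof.
set A := \sum_k a k ^+ 2; set B := \sum_k b k ^+ 2; set C := \sum_k a k * b k.
(* Lagrange's identity *)
have lagrange : \sum_k \sum_l (a k * b l - a l * b k) ^+ 2 = 2 * (A * B - C ^+ 2).
  transitivity (\sum_k (a k ^+ 2 * B + b k ^+ 2 * A - 2 * (a k * b k) * C)).
    apply: eq_bigr => k _; rewrite /A /B /C !mulr_sumr -!big_split -sumrB /=.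
    by apply: eq_bigr => l _; ring.
  by rewrite sumrB big_split /= -!mulr_suml -mulr_sumr -/A -/B -/C; ring.
have : 0 <= \sum_k \sum_l (a k * b l - a l * b k) ^+ 2.
  by apply: sumr_ge0 => k _; apply: sumr_ge0 => l _; apply: sqr_ge0.
by rewrite lagrange pmulr_rge0 // subr_ge0.
Qed.

Lemma norm2_ge0 v : 0 <= norm2 v.
Proof. exact: sqrtr_ge0. Qed.

Lemma norm2_0 : norm2 (0 : 'rV[R]_d) = 0.
Proof. by rewrite /norm2 big1 ?sqrtr0 // => k _; rewrite mxE expr0n. Qed.

Lemma ler_norm2D u v : norm2 (u + v) <= norm2 u + norm2 v.
Proof.
rewrite /norm2.
set A := \sum_k u 0 k ^+ 2; set B := \sum_k v 0 k ^+ 2.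
set C := \sum_k u 0 k * v 0 k.
have A0 : 0 <= A by apply: sumr_ge0 => k _; apply: sqr_ge0.
have B0 : 0 <= B by apply: sumr_ge0 => k _; apply: sqr_ge0.
have sqD : \sum_k (u + v) 0 k ^+ 2 = A + B + 2 * C.
  rewrite /A /B /C mulr_sumr -!big_split /=; apply: eq_bigr => k _.
  by rewrite mxE; ring.
have C_le : C <= Num.sqrt A * Num.sqrt B.
  rewrite -sqrtrM //; apply: le_trans (ler_norm C) _.
  rewrite -sqrtr_sqr ler_sqrt; last exact: mulr_ge0.
  exact: cauchy_schwarz.
rewrite sqD -(ger0_norm (addr_ge0 (sqrtr_ge0 A) (sqrtr_ge0 B))) -sqrtr_sqr.
rewrite ler_sqrt ?sqr_ge0 // sqrrD !sqr_sqrtr // mulr2n.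
lra.
Qed.

Lemma norm2Z c v : norm2 (c *: v) = `|c| * norm2 v.
Proof.
rewrite /norm2.
have -> : \sum_k (c *: v) 0 k ^+ 2 = c ^+ 2 * \sum_k v 0 k ^+ 2.
  by rewrite mulr_sumr; apply: eq_bigr => k _; rewrite mxE exprMn.
by rewrite sqrtrM ?sqr_ge0 // sqrtr_sqr.
Qed.

Lemma norm2_distrC u v : norm2 (u - v) = norm2 (v - u).
Proof. by rewrite -opprB -scaleN1r norm2Z normrN1 mul1r. Qed.

Lemma ler_norm2_sum (I : finType) (P : pred I) (g : I -> 'rV[R]_d) :
  norm2 (\sum_(i | P i) g i) <= \sum_(i | P i) norm2 (g i).
Proof.
elim/big_rec2: _ => [|i v w _ le_vw]; first by rewrite norm2_0.
by apply: le_trans (ler_norm2D _ _) _; rewrite lerD2l.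
Qed.

Lemma norm2_avg_sub_le (I : finType) (A : {set I}) (g : I -> 'rV[R]_d) z (D : R) :
  (0 < #|A|)%N -> (forall i, i \in A -> norm2 (g i - z) <= D) ->
  norm2 ((#|A|%:R)^-1 *: \sum_(i in A) g i - z) <= D.
Proof.
move=> A_gt0 le_gD.
have nz : (#|A|%:R : R) != 0 by rewrite pnatr_eq0 -lt0n.
have -> : z = (#|A|%:R)^-1 *: \sum_(i in A) z.
  by rewrite sumr_const -scaler_nat scalerA mulVf // scale1r.
rewrite -scalerBr -sumrB norm2Z ger0_norm ?invr_ge0 ?ler0n //.
rewrite ler_pdivrMl ?ltr0n //.
apply: le_trans; first exact: ler_norm2_sum.
apply: le_trans (ler_sum _ le_gD) _.
by rewrite sumr_const mulr_natl.
Qed.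

End EuclideanNorm.

Section Diameter.
Context {R : rcfType} {d n : nat} (x : 'I_n -> 'rV[R]_d).

Lemma diam_ge0 (I : pred 'I_n) : 0 <= diam x I.
Proof.
rewrite /diam; elim/big_ind: _ => // [a b a0 _|i _]; first by rewrite le_max a0.
elim/big_ind: _ => // [a b a0 _|j _]; first by rewrite le_max a0.
exact: norm2_ge0.
Qed.

Lemma norm2_le_diam (I : pred 'I_n) i j :
  I i -> I j -> norm2 (x i - x j) <= diam x I.
Proof.
move=> Ii Ij; rewrite /diam (bigD1 i) //= le_max; apply/orP; left.
by rewrite (bigD1 j) //= le_max lexx.
Qed.

Lemma diam_le (I : pred 'I_n) (c : R) : 0 <= c ->
  (forall i j, I i -> I j -> norm2 (x i - x j) <= c) -> diam x I <= c.
Proof.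
move=> c0 le_c; rewrite /diam.
elim/big_ind: _ => // [a b ac bc|i Ii]; first by rewrite ge_max ac bc.
elim/big_ind: _ => // [a b ac bc|j Ij]; first by rewrite ge_max ac bc.
exact: le_c.
Qed.

End Diameter.

Lemma diam_comp_le (R : rcfType) d n m (x : 'I_n -> 'rV[R]_d) (h : 'I_m -> 'I_n)
    (J : pred 'I_m) (I : pred 'I_n) :
  (forall i, J i -> I (h i)) -> diam (fun i => x (h i)) J <= diam x I.
Proof.
move=> hJI; apply: diam_le => [|i j Ji Jj]; first exact: diam_ge0.
by apply: norm2_le_diam; apply: hJI.
Qed.

Lemma setI_neq0_card (T : finType) (A B : {set T}) :
  (#|T| < #|A| + #|B|)%N -> A :&: B != set0.
Proof.
move=> lt_T; rewrite -card_gt0.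
by have := cardsUI A B; have := max_card (A :|: B); lia.
Qed.

Lemma MDA_near_honest {R : rcfType} {d f q} {g : 'I_q -> 'rV[R]_d} {y}
    (J : {set 'I_q}) :
  (2 * f < q)%N -> #|J| = (q - f)%N -> is_MDA f g y ->
  exists2 a, a \in J & norm2 (y - g a) <= diam g (mem J).
Proof.
move=> lt_2f_q cardJ [I [cardI minI ->]].
have /set0Pn [a /setIP [aI aJ]] : I :&: J != set0.
  by apply: setI_neq0_card; rewrite card_ord cardI cardJ; lia.
exists a => //; rewrite -cardI; apply: norm2_avg_sub_le => [|i iI].
  by rewrite cardI; lia.
by apply: le_trans (minI J cardJ); apply: norm2_le_diam.
Qed.

Lemma card_ord_lt n m : (m <= n)%N -> #|[set i : 'I_n | (i < m)%N]| = m.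
Proof.
move=> le_mn; rewrite cardsE -sum1_card (eq_bigl (fun i : 'I_n => i < m)%N) //.
by rewrite (big_ord_narrow le_mn) sum1_card card_ord.
Qed.

Theorem mainTheorem2 (R : rcfType) (d f q : nat)
  (hd : (1 <= d)%N) (hf : (1 <= f)%N) (hq : (2 * f + 1 <= q)%N)
  (x : 'I_(q + q) -> 'rV[R]_d) (y1 y2 : 'rV[R]_d) :
  is_MDA f (fun i : 'I_q => x (lshift q i)) y1 ->
  is_MDA f (fun i : 'I_q => x (rshift q i)) y2 ->
  norm2 (y1 - y2) <=
    3 * diam x (fun k : 'I_(q + q) => ((k < q - f) || ((q <= k) && (k < 2 * q - f))))%N.
Proof.
set H := (fun k : 'I_(q + q) => _); set D := diam x H; move=> M1 M2.
pose J := [set i : 'I_q | (i < q - f)%N].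
have cardJ : #|J| = (q - f)%N by apply: card_ord_lt; apply: leq_subr.
have HJl i : i \in J -> H (lshift q i) by rewrite inE /H /= => ->.
have HJr i : i \in J -> H (rshift q i) by rewrite inE /H /= => ?; lia.
have [|a Ja le1] := MDA_near_honest J _ cardJ M1; first by lia.
have [|b Jb le2] := MDA_near_honest J _ cardJ M2; first by lia.
have {}le1 : norm2 (y1 - x (lshift q a)) <= D.
  by apply: le_trans le1 _; apply: diam_comp_le.
have {}le2 : norm2 (x (rshift q b) - y2) <= D.
  by rewrite norm2_distrC; apply: le_trans le2 _; apply: diam_comp_le.
have le3 : norm2 (x (lshift q a) - x (rshift q b)) <= D.
  by apply: norm2_le_diam; [apply: HJl | apply: HJr].
have -> : y1 - y2 = (y1 - x (lshift q a)) + (x (lshift q a) - x (rshift q b))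
                    + (x (rshift q b) - y2) by rewrite !addrA !subrK.
apply: le_trans (ler_norm2D _ _) _.
apply: le_trans (lerD (ler_norm2D _ _) le2) _.
lra.
Qed.
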